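(* Let $\Gamma=\langle A,B\rangle\subset\mathrm{PSL}_2(\mathbb{Z}[i])$ with $A=\begin{pmatrix}1&1\\0&1\end{pmatrix}$, $B=\begin{pmatrix}1&0\\ 1+i&1\end{pmatrix}$. If $X,Y\in\Gamma$ satisfy $\Gamma=\langle X,Y\rangle$ and $\mathrm{tr}\,X=\mathrm{tr}\,Y$, then $X$ and $Y$ are parabolic.
   Context: $\Gamma$ is the image of the discrete faithful representation of the Whitehead link group into $\mathrm{PSL}_2\mathbb{C}$; it is a finite-covolume Kleinian group with traces in $\mathbb{Z}[i]$, the ring of integers of its trace field $\mathbb{Q}(i)$. Traces are taken of lifts to $\mathrm{SL}_2\mathbb{C}$; ''$\mathrm{tr}\,X=\mathrm{tr}\,Y$'' means the elements admit lifts of equal trace. Parabolic means non-identity with $\mathrm{tr}^2=4$. *)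

(* Matrices over algC (Z[i] is a subring of algC). *)
From HB Require Import structures.
From mathcomp Require Import all_boot all_order all_algebra all_field.
Set Implicit Arguments. Unset Strict Implicit. Unset Printing Implicit Defensive.
Import Order.TTheory GRing.Theory Num.Theory.
Local Open Scope ring_scope.

Definition M2 := 'M[algC]_2.

Definition mx2 (a b c d : algC) : M2 :=
  \matrix_(i < 2, j < 2)
    if (i == 0 :> nat) then (if (j == 0 :> nat) then a else b)
    else (if (j == 0 :> nat) then c else d).

Definition Amx : M2 := mx2 1 1 0 1.
Definition Bmx : M2 := mx2 1 0 (1 + 'i) 1.

Inductive gen (S : M2 -> Prop) : M2 -> Prop :=
  | gen_one : gen S 1
  | gen_mul s g : S s -> gen S g -> gen S (s * g)
  | gen_mulV s g : S s -> gen S g -> gen S (s^-1 * g).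

(* The preimage in SL_2 of a subgroup <X1,...> of PSL_2 is <x1, ..., -1>. *)
Definition gen2pm (x y : M2) : M2 -> Prop :=
  gen (fun s => s = x \/ s = y \/ s = -1).

Definition GammaT : M2 -> Prop := gen2pm Amx Bmx.

(* x in SL_2 represents a parabolic element of PSL_2:
   non-identity (x <> +-1) and tr^2 = 4. *)
Definition parabolic (x : M2) : Prop :=
  x <> 1 /\ x <> -1 /\ (\tr x) ^+ 2 = 4.

From HB Require Import structures.
From mathcomp Require Import all_boot all_order all_algebra all_field.
From mathcomp Require Import ring zify.
Import GRing.Theory Num.Theory.
Local Open Scope ring_scope.

(* Put lam = 1 + i, the prime of Z[i] above 2, and lamc = 1 - i,
   so that lam * lamc = 2.  For M in SL_2 let psi M = (M01, M10, M11 - M00),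
   which is linear and kills scalar matrices, and disc X Y = det (psi X, psi Y,
   psi XY).
   1. Gamma lies in the congruence group of matrices [[s + lam p, q], [lam r, s]]
      over Z[i] (GammaT_cong_lam); their traces lie in lam Z[i] (cong_lam_trace).
   2. If <X, Y> = Gamma, then by Cayley-Hamilton A, B, AB are Z[i]-combinations
      of 1, X, Y, XY (gen2pm_zspan), so -lam^2 = disc A B = k * disc X Y with
      k in Z[i] (disc_generating).
   3. Fricke: disc X Y = 4 - t^2 - u^2 - z^2 + t u z for t = tr X, u = tr Y,
      z = tr XY (disc_fricke).  When u = +-t = +-lam T and z = lam W this is
      -lam^2 P Q, so k P Q = 1 and P, Q are units of Z[i]; they differ by
      lam (lamc^2 - T^2), which forces T^2 = lamc^2, i.e. t^2 = 4
      (fricke_unit_trace).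
   4. X, Y are not +-1, since otherwise disc X Y = 0 (disc_pm1). *)

(* i^2 = -1, in the form expected by the ring tactic. *)
Lemma mulii : 'i * 'i = -1 :> algC. Proof. exact: mulCii. Qed.

Definition gaussian (z : algC) : Prop := exists a b : int, z = a%:~R + 'i * b%:~R.

(* Gaussian integers of norm one; by gaussian_mul_eq1 these are the units. *)
Definition gaussian_unit (z : algC) : Prop :=
  exists a b : int, z = a%:~R + 'i * b%:~R /\ a * a + b * b = 1.

Lemma gaussian_int (k : int) : gaussian k%:~R.
Proof. by exists k, 0; rewrite mulr0 addr0. Qed.

Lemma gaussian0 : gaussian 0. Proof. exact: (gaussian_int 0). Qed.

Lemma gaussian1 : gaussian 1. Proof. exact: (gaussian_int 1). Qed.

Lemma gaussiani : gaussian 'i. Proof. by exists 0, 1; rewrite add0r mulr1. Qed.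

Lemma gaussianD {x y} : gaussian x -> gaussian y -> gaussian (x + y).
Proof. by move=> [a [b ->]] [c [d ->]]; exists (a + c), (b + d); rewrite !intrD; ring. Qed.

Lemma gaussianN {x} : gaussian x -> gaussian (- x).
Proof. by move=> [a [b ->]]; exists (- a), (- b); rewrite !intrN; ring. Qed.

Lemma gaussianM {x y} : gaussian x -> gaussian y -> gaussian (x * y).
Proof.
move=> [a [b ->]] [c [d ->]]; exists (a * c - b * d), (a * d + b * c).
by rewrite !(intrD, intrN, intrM); ring: mulii.
Qed.

(* lam generates the prime of Z[i] above 2; lamc = -i lam is its conjugate. *)
Definition lam : algC := 1 + 'i.
Definition lamc : algC := 1 - 'i.

Lemma lam_lamc : lam * lamc = 2. Proof. by rewrite /lam /lamc; ring: mulii. Qed.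

Lemma lam_neq0 : lam != 0.
Proof.
apply/eqP => lam0; move: lam_lamc; rewrite lam0 mul0r => /eqP.
by rewrite eq_sym pnatr_eq0.
Qed.

Ltac gaussian_closure :=
  rewrite ?/lam ?/lamc;
  repeat first [ assumption | exact: gaussian0 | exact: gaussian1 | exact: gaussiani
               | apply: gaussianD | apply: gaussianN | apply: gaussianM ].

Lemma gaussian_coord_inj (a b c d : int) :
  a%:~R + 'i * b%:~R = c%:~R + 'i * d%:~R :> algC -> a = c /\ b = d.
Proof.
move=> e; split; apply: (@intr_inj algC).
- by have := congr1 (fun z => 'Re z) e; rewrite !Re_rect ?realz.
- by have := congr1 (fun z => 'Im z) e; rewrite !Im_rect ?realz.
Qed.

(* Norms are multiplicative nonnegative integers, so a divisor of 1 has norm 1. *)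
Lemma gaussian_mul_eq1 {x y} : gaussian x -> gaussian y -> x * y = 1 -> gaussian_unit x.
Proof.
move=> [a [b ->]] [c [d ->]] e; exists a, b; split=> //.
have [e1 e2] : a * c - b * d = 1 /\ a * d + b * c = 0.
  apply: gaussian_coord_inj.
  have -> : 1%:~R + 'i * 0%:~R = (a%:~R + 'i * b%:~R) * (c%:~R + 'i * d%:~R) :> algC.
    by rewrite e mulr0 addr0.
  by rewrite !(intrD, intrN, intrM); ring: mulii.
have norm_mul : (a * a + b * b) * (c * c + d * d) = 1.
  transitivity ((a * c - b * d) ^+ 2 + (a * d + b * c) ^+ 2); first ring.
  by rewrite e1 e2.
have n_ge0 : 0 <= a * a + b * b by nia.
have m_ge0 : 0 <= c * c + d * d by nia.
move: norm_mul n_ge0 m_ge0; set n := a * a + b * b; set m := c * c + d * d.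
move=> nm n_ge0 m_ge0; have [m0 | m_ge1] : m = 0 \/ 1 <= m by lia.
- by move: nm; rewrite m0 mulr0; lia.
- by nia.
Qed.

Lemma int_sq_bound {a b : int} : a * a + b * b = 1 -> -1 <= a <= 1.
Proof. by move=> e; nia. Qed.

Lemma unit_coords {a b : int} : a * a + b * b = 1 ->
  (a = 1 /\ b = 0) \/ (a = -1 /\ b = 0) \/ (a = 0 /\ b = 1) \/ (a = 0 /\ b = -1).
Proof.
move=> e; have /andP[? ?] := int_sq_bound e.
have /andP[? ?] : -1 <= b <= 1 by apply: (@int_sq_bound b a); rewrite addrC.
have [ea | [ea | ea]] : a = -1 \/ a = 0 \/ a = 1 by lia.
all: have [eb | [eb | eb]] : b = -1 \/ b = 0 \/ b = 1 by lia.
all: by move: e; rewrite ea eb /=; lia.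
Qed.

Lemma int_mul_eqN1 {x y : int} : x * y = -1 -> x * x = 1 /\ y * y = 1.
Proof.
move=> e; have /eqP := congr1 absz e; rewrite abszM muln_eq1 => /andP[/eqP hx /eqP hy].
have [-> | ->] : x = 1 \/ x = -1 by lia.
all: by have [-> | ->] : y = 1 \/ y = -1 by lia.
Qed.

(* Two units differ by lam (lamc^2 - T^2) only if T^2 = lamc^2: writing T = x + i y,
   the two coordinates of the difference differ by 4 (1 + xy), which is too large
   for a difference of units unless xy = -1. *)
Lemma unit_difference_lam {T P Q} :
  gaussian T -> gaussian_unit P -> gaussian_unit Q ->
  Q - P = lam * (lamc ^+ 2 - T ^+ 2) -> T ^+ 2 = lamc ^+ 2.
Proof.
move=> [x [y ->]] [a [b [-> nP]]] [c [d [-> nQ]]] e.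
have [ec ed] : c - a = y * y - x * x + 2 + 2 * x * y /\ d - b = y * y - x * x - 2 - 2 * x * y.
  apply: gaussian_coord_inj; rewrite !(intrD, intrB, intrM).
  transitivity (c%:~R + 'i * d%:~R - (a%:~R + 'i * b%:~R) : algC); first ring.
  by rewrite e /lam /lamc; ring: mulii.
have exy : x * y = -1.
  move: ec ed; case: (unit_coords nP) => [[-> ->]|[[-> ->]|[[-> ->]|[-> ->]]]];
  by case: (unit_coords nQ) => [[-> ->]|[[-> ->]|[[-> ->]|[-> ->]]]]; lia.
have ex : x * x - y * y = 0 by have := int_mul_eqN1 exy; lia.
transitivity ((x * x - y * y)%:~R + 'i * (2 * (x * y))%:~R : algC).
  by rewrite !(intrD, intrB, intrM); ring: mulii.
by rewrite exy ex /lamc; ring: mulii.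
Qed.

(* Arithmetic heart of the proof: if -lam^2 is a Z[i]-multiple of the Fricke
   polynomial with t = u = lam T and z = lam W, then t^2 = 4.  The polynomial
   factors as -lam^2 P Q with P = W - lamc and Q = W + lamc - lam T^2, so P and Q
   are units. *)
Lemma fricke_unit_trace {T W k} : gaussian T -> gaussian W -> gaussian k ->
  - lam ^+ 2 = k * (4 - 2 * (lam * T) ^+ 2 - (lam * W) ^+ 2 + (lam * T) ^+ 2 * (lam * W)) ->
  (lam * T) ^+ 2 = 4.
Proof.
move=> gT gW gk fricke.
pose P : algC := W - lamc; pose Q : algC := W + lamc - lam * T ^+ 2.
have kPQ : k * (P * Q) = 1.
  apply: (mulfI (_ : - lam ^+ 2 != 0)); first by rewrite oppr_eq0 expf_neq0 // lam_neq0.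
  by rewrite mulr1 {2}fricke /P /Q /lam /lamc; ring: mulii.
have gP : gaussian P by rewrite /P; gaussian_closure.
have gQ : gaussian Q by rewrite /Q; gaussian_closure.
have uP : gaussian_unit P.
  by apply: (gaussian_mul_eq1 gP (gaussianM gQ gk)); rewrite -kPQ; ring.
have uQ : gaussian_unit Q.
  by apply: (gaussian_mul_eq1 gQ (gaussianM gP gk)); rewrite -kPQ; ring.
have TT : T ^+ 2 = lamc ^+ 2.
  by apply: (unit_difference_lam gT uP uQ); rewrite /P /Q /lam /lamc; ring: mulii.
by rewrite exprMn TT -exprMn lam_lamc; ring.
Qed.

Lemma mx2M a b c d a' b' c' d' :
  mx2 a b c d * mx2 a' b' c' d' =
  mx2 (a * a' + b * c') (a * b' + b * d') (c * a' + d * c') (c * b' + d * d').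
Proof.
apply/matrixP => i j; rewrite !mxE !big_ord_recl big_ord0 !mxE /=.
by case: i => [[|[|?]] ?]; case: j => [[|[|?]] ?] //=; rewrite addr0.
Qed.

Lemma mx2D a b c d a' b' c' d' :
  mx2 a b c d + mx2 a' b' c' d' = mx2 (a + a') (b + b') (c + c') (d + d').
Proof. by apply/matrixP => i j; rewrite !mxE; case: (i == 0 :> nat); case: (j == 0 :> nat). Qed.

Lemma mx2Z k a b c d : k *: mx2 a b c d = mx2 (k * a) (k * b) (k * c) (k * d).
Proof. by apply/matrixP => i j; rewrite !mxE; case: (i == 0 :> nat); case: (j == 0 :> nat). Qed.

Lemma mx2_scalar k : k%:M = mx2 k 0 0 k :> M2.
Proof. by apply/matrixP => i j; rewrite !mxE; case: i => [[|[|?]] ?]; case: j => [[|[|?]] ?]. Qed.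

Lemma mx2_1 : 1 = mx2 1 0 0 1. Proof. exact: mx2_scalar. Qed.

Lemma mx2_N1 : -1 = mx2 (-1) 0 0 (-1).
Proof.
rewrite mx2_1; apply/matrixP => i j; rewrite !mxE.
by case: i => [[|[|?]] ?]; case: j => [[|[|?]] ?] //=; rewrite oppr0.
Qed.

Lemma tr_mx2 a b c d : \tr (mx2 a b c d) = a + d.
Proof. by rewrite /mxtrace !big_ord_recl big_ord0 !mxE /= addr0. Qed.

Lemma inv_sl2 a b c d : a * d - b * c = 1 -> (mx2 a b c d)^-1 = mx2 d (-b) (-c) a.
Proof.
move=> det1.
have mulV : mx2 d (-b) (-c) a * mx2 a b c d = 1.
  by rewrite mx2M mx2_1 -det1; congr mx2; ring.
have mulVr : mx2 a b c d * mx2 d (-b) (-c) a = 1.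
  by rewrite mx2M mx2_1 -det1; congr mx2; ring.
have unitX : mx2 a b c d \is a GRing.unit by apply/unitrP; exists (mx2 d (-b) (-c) a).
by rewrite -[LHS]mul1r -mulV mulrK.
Qed.

(* Cayley-Hamilton in determinant one: X^-1 = tr X - X. *)
Lemma inv_sl2_trace a b c d : a * d - b * c = 1 ->
  (mx2 a b c d)^-1 = (\tr (mx2 a b c d))%:M - mx2 a b c d.
Proof.
move=> det1; rewrite inv_sl2 // tr_mx2 mx2_scalar -scaleN1r mx2Z mx2D.
by congr mx2; ring.
Qed.

Definition cong_lam (M : M2) : Prop :=
  exists s p q r, [/\ gaussian s, gaussian p, gaussian q & gaussian r] /\
    M = mx2 (s + lam * p) q (lam * r) s /\ (s + lam * p) * s - q * (lam * r) = 1.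

Lemma cong_lam_mul {M N} : cong_lam M -> cong_lam N -> cong_lam (M * N).
Proof.
move=> [s [p [q [r [[gs gp gq gr] [-> dM]]]]]] [s' [p' [q' [r' [[gs' gp' gq' gr'] [-> dN]]]]]].
exists (lam * r * q' + s * s'), (p * s' + s * p' + lam * p * p' + q * r' - r * q'),
  ((s + lam * p) * q' + q * s'), (r * (s' + lam * p') + s * r').
split; first by split; gaussian_closure.
split; first by rewrite mx2M; congr mx2; ring.
by rewrite -[1]mulr1 -{1}dM -dN; ring.
Qed.

Lemma cong_lam_inv {M} : cong_lam M -> cong_lam M^-1.
Proof.
move=> [s [p [q [r [[gs gp gq gr] [-> dM]]]]]].
exists (s + lam * p), (- p), (- q), (- r).
split; first by split; gaussian_closure.
by rewrite inv_sl2 //; split; [congr mx2; ring | rewrite -dM; ring].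
Qed.

(* The trace of a congruence matrix is divisible by lam, because 2 = lam lamc. *)
Lemma cong_lam_trace {M} : cong_lam M -> exists T, gaussian T /\ \tr M = lam * T.
Proof.
move=> [s [p [q [r [[gs gp gq gr] [-> _]]]]]].
exists (lamc * s + p); split; first by gaussian_closure.
by rewrite tr_mx2 mulrDr mulrA lam_lamc; ring.
Qed.

Lemma cong_lam_generators : [/\ cong_lam Amx, cong_lam Bmx & cong_lam (-1)].
Proof.
split.
- exists 1, 0, 1, 0; split; first by split; gaussian_closure.
  by rewrite /Amx; split; [congr mx2 | ]; ring.
- exists 1, 0, 0, 1; split; first by split; gaussian_closure.
  by rewrite /Bmx /lam; split; [congr mx2 | ]; ring.
- exists (-1), 0, 0, 0; split; first by split; gaussian_closure.
  by rewrite mx2_N1; split; [congr mx2 | ]; ring.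
Qed.

Lemma GammaT_cong_lam {M} : GammaT M -> cong_lam M.
Proof.
have [cA cB cN] := cong_lam_generators.
have gen_cong s : s = Amx \/ s = Bmx \/ s = -1 -> cong_lam s by case=> [->|[->|->]].
elim=> [|s g /gen_cong cs _ cg|s g /gen_cong cs _ cg].
- by rewrite -[1]opprK -mulN1r; apply: cong_lam_mul.
- exact: cong_lam_mul.
- by apply: cong_lam_mul => //; apply: cong_lam_inv.
Qed.

(* The Z[i]-span of 1, X, Y, XY: by Cayley-Hamilton it is stable under left
   multiplication by X, Y and their inverses, so it contains the group <X, Y>. *)
Definition span_comb (X Y : M2) (al be ga de : algC) : M2 :=
  al%:M + be *: X + ga *: Y + de *: (X * Y).

Definition zspan (X Y M : M2) : Prop :=
  exists al be ga de, [/\ gaussian al, gaussian be, gaussian ga & gaussian de] /\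
    M = span_comb X Y al be ga de.

(* Coordinates of the trace-free part of a matrix; psi vanishes on scalar matrices. *)
Definition psi (M : M2) : algC * algC * algC :=
  (M ord0 ord_max, M ord_max ord0, M ord_max ord_max - M ord0 ord0).

Definition det3 (u v w : algC * algC * algC) : algC :=
  let: (u1, u2, u3) := u in let: (v1, v2, v3) := v in let: (w1, w2, w3) := w in
  u1 * (v2 * w3 - v3 * w2) - u2 * (v1 * w3 - v3 * w1) + u3 * (v1 * w2 - v2 * w1).

Definition comb3 (k u v w : algC * algC * algC) : algC * algC * algC :=
  let: (k1, k2, k3) := k in let: (u1, u2, u3) := u in
  let: (v1, v2, v3) := v in let: (w1, w2, w3) := w in
  (k1 * u1 + k2 * v1 + k3 * w1, k1 * u2 + k2 * v2 + k3 * w2, k1 * u3 + k2 * v3 + k3 * w3).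

Lemma det3_comb3 k1 k2 k3 u v w :
  det3 (comb3 k1 u v w) (comb3 k2 u v w) (comb3 k3 u v w) = det3 k1 k2 k3 * det3 u v w.
Proof.
case: k1 => [[? ?] ?]; case: k2 => [[? ?] ?]; case: k3 => [[? ?] ?].
by case: u => [[? ?] ?]; case: v => [[? ?] ?]; case: w => [[? ?] ?] /=; ring.
Qed.

Lemma psi_mx2 a b c d : psi (mx2 a b c d) = (b, c, d - a).
Proof. by rewrite /psi !mxE. Qed.

(* The invariant of a pair of matrices; by Fricke's identity below it equals
   2 - tr [X, Y] for X, Y of determinant one. *)
Definition disc (X Y : M2) : algC := det3 (psi X) (psi Y) (psi (X * Y)).

Section TraceSpan.

Context {a b c d e f g h : algC}.
Let X := mx2 a b c d.
Let Y := mx2 e f g h.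
Hypothesis detX : a * d - b * c = 1.
Hypothesis detY : e * h - f * g = 1.

Lemma span_combE al be ga de : span_comb X Y al be ga de =
  mx2 (al + be * a + ga * e + de * (a * e + b * g)) (be * b + ga * f + de * (a * f + b * h))
      (be * c + ga * g + de * (c * e + d * g)) (al + be * d + ga * h + de * (c * f + d * h)).
Proof. by rewrite /span_comb /X /Y mx2M mx2_scalar !mx2Z !mx2D; congr mx2; ring. Qed.

Lemma zspan1 : zspan X Y 1.
Proof.
exists 1, 0, 0, 0; split; first by split; gaussian_closure.
by rewrite span_combE mx2_1; congr mx2; ring.
Qed.

Lemma zspanZB k M N : gaussian k -> zspan X Y M -> zspan X Y N -> zspan X Y (k *: M - N).
Proof.
move=> gk [al [be [ga [de [[g1 g2 g3 g4] ->]]]]] [al' [be' [ga' [de' [[g1' g2' g3' g4'] ->]]]]].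
exists (k * al - al'), (k * be - be'), (k * ga - ga'), (k * de - de').
split; first by split; gaussian_closure.
by rewrite !span_combE mx2Z -scaleN1r !mx2Z mx2D; congr mx2; ring.
Qed.

Section GaussianTraces.

Hypothesis gauss_trX : gaussian (\tr X).
Hypothesis gauss_trY : gaussian (\tr Y).
Hypothesis gauss_trXY : gaussian (\tr (X * Y)).

(* X^2 = tr X * X - 1. *)
Lemma zspan_mulX M : zspan X Y M -> zspan X Y (X * M).
Proof.
move=> [al [be [ga [de [[g1 g2 g3 g4] ->]]]]].
move: gauss_trX; rewrite /X tr_mx2 => gt.
exists (- be * (a * d - b * c)), (al + be * (a + d)), (- de * (a * d - b * c)), (ga + de * (a + d)).
split; first by rewrite detX !mulr1; split; gaussian_closure.
by rewrite !span_combE /X mx2M; congr mx2; ring.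
Qed.

(* YX = tr(XY) - tr X tr Y + tr Y * X + tr X * Y - XY, and Y^2 = tr Y * Y - 1. *)
Lemma zspan_mulY M : zspan X Y M -> zspan X Y (Y * M).
Proof.
move=> [al [be [ga [de [[g1 g2 g3 g4] ->]]]]].
move: gauss_trX gauss_trY gauss_trXY; rewrite /X /Y mx2M !tr_mx2 => gt gu gz.
exists (be * (a * e + b * g + (c * f + d * h) - (a + d) * (e + h))
        - (ga + de * (a + d)) * (e * h - f * g)),
  (be * (e + h) + de * (e * h - f * g)),
  (al + be * (a + d) + ga * (e + h) + de * (a * e + b * g + (c * f + d * h))), (- be).
split; first by rewrite detY !mulr1; split; gaussian_closure.
by rewrite !span_combE /Y mx2M; congr mx2; ring.
Qed.

(* Left multiplication by X^-1 = tr X - X or Y^-1 = tr Y - Y. *)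
Lemma zspan_mulV N M : N = X \/ N = Y -> zspan X Y M -> zspan X Y (N^-1 * M).
Proof.
move=> NXY zM.
have [trN gN zNM] : [/\ N^-1 = (\tr N)%:M - N, gaussian (\tr N) & zspan X Y (N * M)].
  case: NXY => ->.
  - by split; [exact: inv_sl2_trace | | exact: zspan_mulX].
  - by split; [exact: inv_sl2_trace | | exact: zspan_mulY].
rewrite trN mulrBl.
have -> : (\tr N)%:M * M = \tr N *: M by rewrite -mul_scalar_mx.
exact: zspanZB.
Qed.

Lemma gen2pm_zspan M : gen2pm X Y M -> zspan X Y M.
Proof.
have zspanN N : zspan X Y N -> zspan X Y (-1 * N).
  move=> zN; rewrite mulN1r -[- N]sub0r -(scale0r N).
  by apply: zspanZB => //; gaussian_closure.
elim=> [|s N Hs _ zN|s N Hs _ zN]; first exact: zspan1.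
- by case: Hs => [->|[->|->]]; [exact: zspan_mulX | exact: zspan_mulY | exact: zspanN].
- case: Hs => [->|[->|->]]; [exact: zspan_mulV (or_introl _) zN | exact: zspan_mulV (or_intror _) zN |].
  by rewrite invrN1; exact: zspanN.
Qed.

End GaussianTraces.

Lemma psi_span_comb al be ga de :
  psi (span_comb X Y al be ga de) = comb3 (be, ga, de) (psi X) (psi Y) (psi (X * Y)).
Proof. by rewrite span_combE /X /Y mx2M !psi_mx2 /=; congr (_, _, _); ring. Qed.

(* psi is Z[i]-linear on the span, so disc X Y divides the determinant of any
   three psi-vectors of span elements. *)
Lemma zspan_det3 {M1 M2 M3} : zspan X Y M1 -> zspan X Y M2 -> zspan X Y M3 ->
  exists k, gaussian k /\ det3 (psi M1) (psi M2) (psi M3) = k * disc X Y.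
Proof.
move=> [al1 [be1 [ga1 [de1 [[_ gb1 gc1 gd1] ->]]]]].
move=> [al2 [be2 [ga2 [de2 [[_ gb2 gc2 gd2] ->]]]]].
move=> [al3 [be3 [ga3 [de3 [[_ gb3 gc3 gd3] ->]]]]].
exists (det3 (be1, ga1, de1) (be2, ga2, de2) (be3, ga3, de3)).
by split; [rewrite /det3; gaussian_closure | rewrite !psi_span_comb det3_comb3].
Qed.

Lemma disc_fricke : disc X Y =
  4 - \tr X ^+ 2 - \tr Y ^+ 2 - \tr (X * Y) ^+ 2 + \tr X * \tr Y * \tr (X * Y).
Proof.
rewrite /disc /X /Y mx2M !psi_mx2 !tr_mx2 /det3.
transitivity (4 * (a * d - b * c) * (e * h - f * g) - (a + d) ^+ 2 * (e * h - f * g)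
  - (e + h) ^+ 2 * (a * d - b * c) - (a * e + b * g + (c * f + d * h)) ^+ 2
  + (a + d) * (e + h) * (a * e + b * g + (c * f + d * h))); first ring.
by rewrite detX detY; ring.
Qed.

End TraceSpan.

Lemma disc_generators : disc Amx Bmx = - lam ^+ 2.
Proof. by rewrite /disc /Amx /Bmx mx2M /psi !mxE /det3 /lam /=; ring. Qed.

Lemma psi_pm1 M : M = 1 \/ M = -1 -> psi M = (0, 0, 0).
Proof. by case=> ->; rewrite ?mx2_N1 ?mx2_1 psi_mx2 ?subrr. Qed.

Lemma disc_pm1 X Y : (X = 1 \/ X = -1) \/ (Y = 1 \/ Y = -1) -> disc X Y = 0.
Proof.
rewrite /disc; case=> /psi_pm1 ->.
- by case: (psi Y) => [[? ?] ?]; case: (psi (X * Y)) => [[? ?] ?] /=; ring.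
- by case: (psi X) => [[? ?] ?]; case: (psi (X * Y)) => [[? ?] ?] /=; ring.
Qed.

Lemma GammaT_generators : [/\ GammaT Amx, GammaT Bmx & GammaT (Amx * Bmx)].
Proof.
have GA : GammaT Amx by rewrite -[Amx]mulr1; apply: gen_mul; [left | exact: gen_one].
have GB : GammaT Bmx by rewrite -[Bmx]mulr1; apply: gen_mul; [right; left | exact: gen_one].
by split=> //; apply: gen_mul => //; left.
Qed.

Lemma disc_generating {X Y} : cong_lam X -> cong_lam Y ->
  (forall Z, gen2pm X Y Z <-> GammaT Z) ->
  exists k, gaussian k /\ - lam ^+ 2 = k * disc X Y.
Proof.
move=> cX cY gen_eq.
have [[T [gT trX]] [U [gU trY]]] := (cong_lam_trace cX, cong_lam_trace cY).
have [W [gW trXY]] := cong_lam_trace (cong_lam_mul cX cY).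
move: cX cY gen_eq trX trY trXY.
move=> [s1 [p1 [q1 [r1 [_ [-> detX]]]]]] [s2 [p2 [q2 [r2 [_ [-> detY]]]]]] gen_eq trX trY trXY.
have zspanG M : GammaT M -> zspan (mx2 (s1 + lam * p1) q1 (lam * r1) s1)
                                   (mx2 (s2 + lam * p2) q2 (lam * r2) s2) M.
  by move=> /gen_eq; apply: gen2pm_zspan => //; rewrite ?trX ?trY ?trXY; gaussian_closure.
have [GA GB GAB] := GammaT_generators.
have [k [gk Dk]] := zspan_det3 (zspanG _ GA) (zspanG _ GB) (zspanG _ GAB).
by exists k; split; rewrite // -disc_generators.
Qed.

Lemma cong_lam_fricke {X Y} : cong_lam X -> cong_lam Y -> disc X Y =
  4 - \tr X ^+ 2 - \tr Y ^+ 2 - \tr (X * Y) ^+ 2 + \tr X * \tr Y * \tr (X * Y).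
Proof. by move=> [? [? [? [? [_ [-> dX]]]]]] [? [? [? [? [_ [-> dY]]]]]]; exact: disc_fricke. Qed.

Theorem theorem1p3 (x y : M2) :
  GammaT x -> GammaT y ->
  (forall z : M2, gen2pm x y z <-> GammaT z) ->
  (\tr x = \tr y \/ \tr x = - \tr y) ->
  parabolic x /\ parabolic y.
Proof.
move=> Gx Gy gen_eq tr_eq.
have [cx cy] := (GammaT_cong_lam Gx, GammaT_cong_lam Gy).
have [k [gk Dk]] := disc_generating cx cy gen_eq.
have disc_neq0 : disc x y != 0.
  apply/eqP => disc0; move/eqP: Dk; rewrite disc0 mulr0 oppr_eq0.
  by rewrite expf_eq0 (negbTE lam_neq0) andbF.
have not_pm1 z : (z = x \/ z = y) -> z <> 1 /\ z <> -1.
  by move=> zxy; split=> z1; move/eqP: disc_neq0; apply; apply: disc_pm1; case: zxy => <-; auto.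
have [T [gT trx]] := cong_lam_trace cx.
have [W [gW trxy]] := cong_lam_trace (cong_lam_mul cx cy).
rewrite (cong_lam_fricke cx cy) trxy in Dk.
have trx4 : \tr x ^+ 2 = 4.
  rewrite trx; case: tr_eq => try.
  - by apply: (fricke_unit_trace gT gW gk); rewrite Dk -try trx; ring.
  - apply: (fricke_unit_trace gT (gaussianN gW) gk).
    by rewrite Dk -[\tr y]opprK -try trx; ring.
have try4 : \tr y ^+ 2 = 4 by case: tr_eq => try; rewrite -trx4 try ?sqrrN.
have [x_ne1 x_neN1] := not_pm1 x (or_introl erefl).
have [y_ne1 y_neN1] := not_pm1 y (or_intror erefl).
by split; split.
Qed.
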